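(* Let $A,B,X,Y\in\mathcal{B}(\mathcal{H})$. Then \begin{equation*} w(X^*AY+Y^*BX)\leq 2\|X\|\|Y\|\, w\left(\begin{bmatrix} 0 &A \\ B& 0 \end{bmatrix}\right). \end{equation*} In particular, $$w(X^*AY+Y^*AX)\leq 2\|X\|\|Y\|\, w(A).$$
   Context: $\mathcal{H}$ is a complex Hilbert space and $\mathcal{B}(\mathcal{H})$ is the $C^*$-algebra of all bounded linear operators on $\mathcal{H}$. For $T\in\mathcal{B}(\mathcal{H})$, $w(T)=\sup\{|\langle Tx,x\rangle|:\|x\|=1\}$ is the numerical radius and $\|T\|$ the operator norm. A $2\times 2$ operator matrix with entries in $\mathcal{B}(\mathcal{H})$ is regarded as an operator on $\mathcal{H}\oplus\mathcal{H}$. *)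

From HB Require Import structures.
From mathcomp Require Import all_boot all_order all_algebra.
From mathcomp Require Import complex.
From mathcomp Require Import all_classical all_reals.
Set Implicit Arguments. Unset Strict Implicit. Unset Printing Implicit Defensive.
Import Order.TTheory GRing.Theory Num.Theory.
Local Open Scope ring_scope.
Local Open Scope classical_set_scope.

(* A complex Hilbert space is modelled as a module V over C = R[i]
   (R an arbitrary realType, i.e. the real numbers) together with an
   inner product ip, linear in the first argument, conjugate symmetric,
   positive definite, whose induced norm is complete. *)

Section Hilbert.
Variable R : realType.
Local Notation C := R[i].
Variable V : lmodType C.
Variable ip : V -> V -> C.

Definition is_inner_product : Prop :=
  [/\ forall (a : C) (x y z : V), ip (a *: x + y) z = a * ip x z + ip y z,
      forall x y : V, ip y x = Num.conj (ip x y),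
      forall x : V, 0 <= ip x x
    & forall x : V, ip x x = 0 -> x = 0].

Definition hnorm (x : V) : R := Num.sqrt (complex.Re (ip x x)).

Definition hcauchy (u : nat -> V) : Prop :=
  forall e : R, 0 < e -> exists N : nat, forall m n : nat,
    (N <= m)%N -> (N <= n)%N -> hnorm (u m - u n) < e.

Definition hconverges (u : nat -> V) : Prop :=
  exists l : V, forall e : R, 0 < e -> exists N : nat, forall n : nat,
    (N <= n)%N -> hnorm (u n - l) < e.

Definition is_hilbert_space : Prop :=
  is_inner_product /\ forall u : nat -> V, hcauchy u -> hconverges u.

Definition bounded_op (T : V -> V) : Prop :=
  (forall (a : C) (x y : V), T (a *: x + y) = a *: T x + T y) /\
  exists M : R, forall x : V, hnorm (T x) <= M * hnorm x.

Definition is_adjoint (T Ts : V -> V) : Prop :=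
  forall x y : V, ip (T x) y = ip x (Ts y).

Definition opnorm (T : V -> V) : R :=
  sup [set hnorm (T x) | x in [set x : V | hnorm x = 1]].

Definition numrad (T : V -> V) : R :=
  sup [set Normc.normc (ip (T x) x) | x in [set x : V | hnorm x = 1]].

(* numerical radius of the operator matrix [[0, A], [B, 0]] acting on
   H ⊕ H (with inner product <(x1,y1),(x2,y2)> = <x1,x2> + <y1,y2>):
   [[0,A],[B,0]] (x,y) = (A y, B x), so
   w = sup { |<A y, x> + <B x, y>| : ||x||^2 + ||y||^2 = 1 }. *)
Definition numrad_offdiag (A B : V -> V) : R :=
  sup [set Normc.normc (ip (A xy.2) xy.1 + ip (B xy.1) xy.2)
      | xy in [set xy : V * V | hnorm xy.1 ^+ 2 + hnorm xy.2 ^+ 2 = 1]].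

End Hilbert.

From HB Require Import structures.
From mathcomp Require Import all_boot all_order all_algebra.
From mathcomp Require Import complex.
From mathcomp Require Import all_classical all_reals.
From mathcomp Require Import ring lra.
Import Order.TTheory GRing.Theory Num.Theory.
Local Open Scope complex_scope.
Local Open Scope ring_scope.
Local Open Scope classical_set_scope.

(* Put F(u, v) = <A v, u> + <B u, v>.  Both w([[0, A], [B, 0]]) and w(T) are
   suprema of quadratic forms that are homogeneous of degree 2 under real
   scaling, so |F(u, v)| <= w([[0, A], [B, 0]]) (||u||^2 + ||v||^2) and
   |<T x, x>| <= w(T) ||x||^2.  Evaluating the first bound at the rescaled
   pair (||v|| u, ||u|| v) gives |F(u, v)| <= 2 ||u|| ||v|| w([[0, A], [B, 0]]),
   and <(X^* A Y + Y^* B X) x, x> = F(X x, Y x).  For B = A, the polarization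
   identity 2 F(x, y) = <A(x+y), x+y> - <A(x-y), x-y> and the parallelogram
   law give w([[0, A], [A, 0]]) <= w(A). *)

Section SupImage.
Context {R : realType} {T : Type} {f : T -> R} {S : set T}.

Lemma sup_image_ge0 : (forall x, 0 <= f x) -> 0 <= sup (f @` S).
Proof.
move=> f_ge0; have [[[_ [x Sx _]] ub]|/sup_out -> //] := pselect (has_sup (f @` S)).
by apply: le_trans (f_ge0 x) _; apply: ub_le_sup => //; exists x.
Qed.

Lemma sup_image_le c : 0 <= c -> (forall x, S x -> f x <= c) -> sup (f @` S) <= c.
Proof.
move=> c_ge0 fS_le; have [[y fSy]|S0] := pselect (f @` S !=set0).
  by apply: ge_sup; [exists y | move=> _ [x Sx <-]; exact: fS_le].
by rewrite (_ : f @` S = set0) ?sup0 //; apply/seteqP; split=> // y fSy; case: S0; exists y.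
Qed.

Lemma le_sup_image x : has_ubound (f @` S) -> S x -> f x <= sup (f @` S).
Proof. by move=> ub Sx; apply: ub_le_sup => //; exists x. Qed.

End SupImage.

Lemma normc_real (R : rcfType) (a : R) : Normc.normc a%:C = `|a|.
Proof. by rewrite /= expr0n /= addr0 sqrtr_sqr. Qed.

Lemma normc_ge0 {R : rcfType} (z : R[i]) : 0 <= Normc.normc z.
Proof. by case: z => a b; apply: sqrtr_ge0. Qed.

Lemma normC_normc (R : rcfType) (z : R[i]) : `|z| = (Normc.normc z)%:C.
Proof. by case: z => a b; rewrite normc_def. Qed.

Section LinearMap.
Context {K : pzRingType} {U W : lmodType K} {f : U -> W}.
Hypothesis f_lin : linear f.

Let fL : {linear U -> W} := HB.pack f (GRing.isLinear.Build _ _ _ _ f f_lin).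

Lemma linear_map0 : f 0 = 0. Proof. exact: linear0 fL. Qed.
Lemma linear_mapD x y : f (x + y) = f x + f y. Proof. by have := raddfD fL x y. Qed.
Lemma linear_mapB x y : f (x - y) = f x - f y. Proof. by have := raddfB fL x y. Qed.
Lemma linear_mapZ a x : f (a *: x) = a *: f x. Proof. by have := linearZZ fL a x. Qed.

End LinearMap.

Section Homogeneous.
Context {R : realType} {W : lmodType R[i]} {Q : W -> R[i]} {N : W -> R} {S : set W}.
Hypotheses (QZ : forall (r : R) x, Q (r%:C *: x) = (r ^+ 2)%:C * Q x)
  (NZ : forall (r : R) x, N (r%:C *: x) = r ^+ 2 * N x)
  (N_ge0 : forall x, 0 <= N x) (Q_N0 : forall x, N x = 0 -> Q x = 0)
  (S_N1 : forall x, N x = 1 -> S x)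
  (Q_bounded : has_ubound [set Normc.normc (Q x) | x in S]).

Lemma normc_le_sup_homogeneous x :
  Normc.normc (Q x) <= sup [set Normc.normc (Q x) | x in S] * N x.
Proof.
have [Nx0|Nx_neq0] := eqVneq (N x) 0; first by rewrite Nx0 Q_N0 // Normc.normc0 mulr0.
pose r := (Num.sqrt (N x))^-1.
have r2N : r ^+ 2 * N x = 1 by rewrite exprVn sqr_sqrtr ?N_ge0 // mulVf.
have := le_sup_image _ Q_bounded (S_N1 _ (etrans (NZ r x) r2N)).
rewrite QZ Normc.normcM normc_real ger0_norm ?sqr_ge0 // => le_sup.
have -> : Normc.normc (Q x) = N x * (r ^+ 2 * Normc.normc (Q x)).
  by rewrite mulrA [N x * _]mulrC r2N mul1r.
by rewrite [_ * N x]mulrC; apply: ler_wpM2l.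
Qed.

End Homogeneous.

Section InnerProduct.
Context {R : realType} {V : lmodType R[i]} {ip : V -> V -> R[i]}.
Hypothesis ipP : is_inner_product ip.

Lemma ip0l z : ip 0 z = 0.
Proof.
case: ipP => ip_lin _ _ _; have := ip_lin 1 0 0 z.
by rewrite scale1r addr0 mul1r => /esym/eqP; rewrite -subr_eq0 addrK => /eqP.
Qed.

Lemma ipDl x y z : ip (x + y) z = ip x z + ip y z.
Proof. by case: ipP => ip_lin _ _ _; have := ip_lin 1 x y z; rewrite scale1r mul1r. Qed.

Lemma ipZl a x z : ip (a *: x) z = a * ip x z.
Proof. by case: ipP => ip_lin _ _ _; have := ip_lin a x 0 z; rewrite addr0 ip0l addr0. Qed.

Lemma ipNl x z : ip (- x) z = - ip x z.
Proof. by rewrite -scaleN1r ipZl mulN1r. Qed.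

Lemma ip_conj x y : ip y x = (ip x y)^*.
Proof. by case: ipP. Qed.

Lemma ip0r z : ip z 0 = 0.
Proof. by rewrite ip_conj ip0l rmorph0. Qed.

Lemma ipDr x y z : ip z (x + y) = ip z x + ip z y.
Proof. by rewrite ip_conj ipDl rmorphD [ip z x]ip_conj [ip z y]ip_conj. Qed.

Lemma ipZr a x z : ip z (a *: x) = a^* * ip z x.
Proof. by rewrite ip_conj ipZl rmorphM [ip z x]ip_conj. Qed.

Lemma ipNr x z : ip z (- x) = - ip z x.
Proof. by rewrite ip_conj ipNl rmorphN [ip z x]ip_conj. Qed.

Lemma ipZr_real (r : R) x z : ip z (r%:C *: x) = r%:C * ip z x.
Proof. by rewrite ipZr conj_Creal ?complex_real. Qed.

Definition sqnorm x : R := complex.Re (ip x x).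

Lemma ip_sqnorm x : ip x x = (sqnorm x)%:C.
Proof. by case: ipP => _ _ /(_ x) + _; rewrite /sqnorm; case: (ip x x) => a b /ger0_Im /= ->. Qed.

Lemma sqnorm_ge0 x : 0 <= sqnorm x.
Proof. by rewrite -lecR -ip_sqnorm; case: ipP. Qed.

Lemma sqnorm_eq0 x : sqnorm x = 0 -> x = 0.
Proof. by move=> x0; case: ipP => _ _ _; apply; rewrite ip_sqnorm x0. Qed.

Lemma hnorm_sqr x : hnorm ip x ^+ 2 = sqnorm x.
Proof. by rewrite sqr_sqrtr // sqnorm_ge0. Qed.

Lemma hnorm_ge0 x : 0 <= hnorm ip x.
Proof. exact: sqrtr_ge0. Qed.

Lemma hnorm_eq0 x : hnorm ip x = 0 -> x = 0.
Proof. by move=> x0; apply: sqnorm_eq0; rewrite -hnorm_sqr x0 expr0n. Qed.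

Lemma sqnormZ (r : R) x : sqnorm (r%:C *: x) = r ^+ 2 * sqnorm x.
Proof.
by apply: (@complexI R); rewrite -ip_sqnorm ipZl ipZr_real ip_sqnorm -!rmorphM mulrA.
Qed.

Lemma sqnorm_parallelogram x y :
  sqnorm (x + y) + sqnorm (x - y) = (sqnorm x + sqnorm y) *+ 2.
Proof.
apply: (@complexI R); rewrite rmorphMn !rmorphD /= -!ip_sqnorm.
by rewrite !(ipDl, ipDr, ipNl, ipNr); ring.
Qed.

Lemma normc_ip_le x y : Normc.normc (ip x y) *+ 2 <= sqnorm x + sqnorm y.
Proof.
have [->|w_neq0] := eqVneq (ip x y) 0.
  by rewrite Normc.normc0 mul0rn addr_ge0 ?sqnorm_ge0.
set w := ip x y; pose n : R[i] := `|w|.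
have n_neq0 : n != 0 by rewrite normr_eq0.
have conj_w : w^* = n ^+ 2 / w by rewrite normCKC mulfK.
(* [c] is the phase of [w], so that [0 <= ||x - c y||^2 = ||x||^2 - 2 |w| + ||y||^2]. *)
pose c := w / n.
have conj_c : c^* = n / w.
  by rewrite rmorphM fmorphV /= conj_normC conj_w; field; rewrite n_neq0 w_neq0.
have : 0 <= ip (x - c *: y) (x - c *: y) by case: ipP.
have -> : ip (x - c *: y) (x - c *: y) = ip x x - n *+ 2 + ip y y.
  rewrite !(ipDl, ipDr, ipNl, ipNr, ipZl, ipZr) -/w [ip y x]ip_conj -/w conj_c conj_w /c.
  by field; rewrite n_neq0 w_neq0.
rewrite !ip_sqnorm /n normC_normc -rmorphMn -rmorphB -rmorphD lecR; lra.
Qed.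

Lemma hnormE x : hnorm ip x = Num.sqrt (sqnorm x).
Proof. by []. Qed.

Lemma hnorm_gt0 {x} : x != 0 -> 0 < hnorm ip x.
Proof.
by move=> x_neq0; rewrite lt_neqAle hnorm_ge0 andbT eq_sym (contra_neq (@hnorm_eq0 x)).
Qed.

Lemma ip_adjointl {T Ts} : is_adjoint ip T Ts -> forall w x, ip (Ts w) x = ip w (T x).
Proof. by move=> T_adj w x; rewrite ip_conj -T_adj -ip_conj. Qed.

Lemma sqnorm_le_op {T} {M : R} : (forall x, hnorm ip (T x) <= M * hnorm ip x) ->
  forall x, sqnorm (T x) <= M ^+ 2 * sqnorm x.
Proof.
move=> T_le x; rewrite -!hnorm_sqr -exprMn !expr2.
by apply: ler_pM; rewrite ?hnorm_ge0 ?T_le.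
Qed.

Lemma normc_ip_bounded_op T : bounded_op ip T ->
  exists M, forall x y, Normc.normc (ip (T x) y) <= M * (sqnorm x + sqnorm y).
Proof.
case=> _ [M T_le]; exists (M ^+ 2 + 1) => x y.
have := normc_ip_le (T x) y; have := sqnorm_le_op T_le x.
have := sqnorm_ge0 x; have := sqnorm_ge0 y; have := normc_ge0 (ip (T x) y).
have := mulr_ge0 (sqr_ge0 M) (sqnorm_ge0 y); rewrite mulr2n; nra.
Qed.

Lemma hnorm_le_opnorm T x : bounded_op ip T -> hnorm ip x = 1 ->
  hnorm ip (T x) <= opnorm ip T.
Proof.
case=> _ [M T_le] x1.
have ub : has_ubound [set hnorm ip (T y) | y in [set y | hnorm ip y = 1]].
  by exists M => _ [y y1 <-]; rewrite -[M]mulr1 -y1 T_le.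
exact: le_sup_image ub x1.
Qed.

Lemma opnorm_ge0 T : 0 <= opnorm ip T.
Proof. by apply: sup_image_ge0 => x; apply: hnorm_ge0. Qed.

Lemma numrad_ge0 A : 0 <= numrad ip A.
Proof. by apply: sup_image_ge0 => x; apply: normc_ge0. Qed.

Lemma numrad_offdiag_ge0 A B : 0 <= numrad_offdiag ip A B.
Proof. by apply: sup_image_ge0 => x; apply: normc_ge0. Qed.

Lemma normc_ip_le_numrad {A} : bounded_op ip A ->
  forall x, Normc.normc (ip (A x) x) <= numrad ip A * sqnorm x.
Proof.
move=> A_bnd x; have [A_lin _] := A_bnd.
apply: (normc_le_sup_homogeneous (Q := fun x => ip (A x) x) (N := sqnorm)).
- by move=> r y; rewrite (linear_mapZ A_lin) ipZl ipZr_real rmorphXn mulrA -expr2.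
- exact: sqnormZ.
- exact: sqnorm_ge0.
- by move=> y /sqnorm_eq0 ->; rewrite (linear_map0 A_lin) ip0l.
- by move=> y y1; rewrite /= hnormE y1 sqrtr1.
case/normc_ip_bounded_op: A_bnd => M A_le; exists (M * 2) => _ [y /= y1 <-].
by have := A_le y y; rewrite -hnorm_sqr y1 expr1n.
Qed.

Lemma normc_offdiag_le_sqnorm {A B} : bounded_op ip A -> bounded_op ip B ->
  forall x y, Normc.normc (ip (A y) x + ip (B x) y)
    <= numrad_offdiag ip A B * (sqnorm x + sqnorm y).
Proof.
move=> A_bnd B_bnd x y; have [A_lin _] := A_bnd; have [B_lin _] := B_bnd.
apply: (normc_le_sup_homogeneous
  (Q := fun xy : V * V => ip (A xy.2) xy.1 + ip (B xy.1) xy.2)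
  (N := fun xy => sqnorm xy.1 + sqnorm xy.2) _ _ _ _ _ _ (x, y)).
- move=> r [u v] /=; rewrite (linear_mapZ A_lin) (linear_mapZ B_lin).
  by rewrite !ipZl !ipZr_real rmorphXn /=; ring.
- by move=> r [u v] /=; rewrite !sqnormZ mulrDr.
- by move=> [u v]; rewrite addr_ge0 ?sqnorm_ge0.
- move=> [u v] /= uv0; have := sqnorm_ge0 u; have := sqnorm_ge0 v => v_ge0 u_ge0.
  have /sqnorm_eq0 -> : sqnorm u = 0 by lra.
  have /sqnorm_eq0 -> : sqnorm v = 0 by lra.
  by rewrite (linear_map0 A_lin) (linear_map0 B_lin) ip0l addr0.
- by move=> [u v]; rewrite /= !hnorm_sqr.
case/normc_ip_bounded_op: A_bnd => MA A_le; case/normc_ip_bounded_op: B_bnd => MB B_le.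
exists (MA + MB) => _ [[u v] /= uv1 <-]; rewrite !hnorm_sqr in uv1.
have := A_le v u; have := B_le u v; have := le_normcD (ip (A v) u) (ip (B u) v).
by rewrite [sqnorm v + _]addrC uv1 !mulr1; lra.
Qed.

Lemma normc_offdiag_le {A B} : bounded_op ip A -> bounded_op ip B ->
  forall u v, Normc.normc (ip (A v) u + ip (B u) v)
    <= 2 * hnorm ip u * hnorm ip v * numrad_offdiag ip A B.
Proof.
move=> A_bnd B_bnd u v; have [A_lin _] := A_bnd; have [B_lin _] := B_bnd.
have w_ge0 := numrad_offdiag_ge0 A B.
have [->|u_neq0] := eqVneq u 0.
  by rewrite (linear_map0 B_lin) ip0l ip0r addr0 Normc.normc0 !mulr_ge0 ?hnorm_ge0.
have [->|v_neq0] := eqVneq v 0.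
  by rewrite (linear_map0 A_lin) ip0l ip0r addr0 Normc.normc0 !mulr_ge0 ?hnorm_ge0.
have a_gt0 := hnorm_gt0 u_neq0; have b_gt0 := hnorm_gt0 v_neq0.
set a := hnorm ip u in a_gt0 *; set b := hnorm ip v in b_gt0 *.
have := normc_offdiag_le_sqnorm A_bnd B_bnd (b%:C *: u) (a%:C *: v).
rewrite (linear_mapZ A_lin) (linear_mapZ B_lin) !ipZl !ipZr_real !sqnormZ -!hnorm_sqr -/a -/b.
have -> : a%:C * (b%:C * ip (A v) u) + b%:C * (a%:C * ip (B u) v)
          = (a * b)%:C * (ip (A v) u + ip (B u) v) by rewrite rmorphM /=; ring.
rewrite Normc.normcM normc_real ger0_norm ?mulr_ge0 ?(ltW a_gt0) ?(ltW b_gt0) //.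
rewrite (_ : _ * (_ + _) = a * b * (2 * a * b * numrad_offdiag ip A B)); last by ring.
by rewrite ler_pM2l ?mulr_gt0.
Qed.

Lemma offdiag_polarization A x y : linear A ->
  (ip (A y) x + ip (A x) y) *+ 2
    = ip (A (x + y)) (x + y) - ip (A (x - y)) (x - y).
Proof.
move=> A_lin; rewrite (linear_mapD A_lin) (linear_mapB A_lin).
by rewrite !(ipDl, ipDr, ipNl, ipNr); ring.
Qed.

Lemma numrad_offdiag_diag_le {A} : bounded_op ip A -> numrad_offdiag ip A A <= numrad ip A.
Proof.
move=> A_bnd; have [A_lin _] := A_bnd.
apply: sup_image_le (numrad_ge0 A) _ => -[x y] /=; rewrite !hnorm_sqr => xy1.
have := le_normcD (ip (A (x + y)) (x + y)) (- ip (A (x - y)) (x - y)).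
rewrite -offdiag_polarization // normcMn normcN.
have : Normc.normc (ip (A (x + y)) (x + y)) + Normc.normc (ip (A (x - y)) (x - y))
       <= numrad ip A * 2.
  have le_numrad := normc_ip_le_numrad A_bnd.
  apply: le_trans (lerD (le_numrad (x + y)) (le_numrad (x - y))) _.
  by rewrite -mulrDr sqnorm_parallelogram xy1.
by rewrite !mulr2n; lra.
Qed.

Lemma numrad_sandwich_le {A B X Y Xs Ys} :
  bounded_op ip A -> bounded_op ip B -> bounded_op ip X -> bounded_op ip Y ->
  is_adjoint ip X Xs -> is_adjoint ip Y Ys ->
  numrad ip (fun x => Xs (A (Y x)) + Ys (B (X x)))
    <= 2 * opnorm ip X * opnorm ip Y * numrad_offdiag ip A B.
Proof.
move=> A_bnd B_bnd X_bnd Y_bnd X_adj Y_adj.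
have w_ge0 := numrad_offdiag_ge0 A B.
apply: sup_image_le => [|x x1]; first by rewrite !mulr_ge0 ?opnorm_ge0.
rewrite /= ipDl (ip_adjointl X_adj) (ip_adjointl Y_adj).
apply: le_trans (normc_offdiag_le A_bnd B_bnd _ _) _.
rewrite ler_wpM2r // -!mulrA ler_wpM2l // ler_pM ?hnorm_ge0 //.
- exact: hnorm_le_opnorm.
- exact: hnorm_le_opnorm.
Qed.

End InnerProduct.

Theorem theorem4p15 (R : realType) (V : lmodType R[i]) (ip : V -> V -> R[i])
  (HV : is_hilbert_space ip)
  (A B X Y Xs Ys : V -> V)
  (hA : bounded_op ip A) (hB : bounded_op ip B)
  (hX : bounded_op ip X) (hY : bounded_op ip Y)
  (hXs : is_adjoint ip X Xs) (hYs : is_adjoint ip Y Ys) :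
  numrad ip (fun x => Xs (A (Y x)) + Ys (B (X x)))
    <= 2 * opnorm ip X * opnorm ip Y * numrad_offdiag ip A B
  /\
  numrad ip (fun x => Xs (A (Y x)) + Ys (A (X x)))
    <= 2 * opnorm ip X * opnorm ip Y * numrad ip A.
Proof.
have [ipP _] := HV.
split; first exact: numrad_sandwich_le.
apply: le_trans (numrad_sandwich_le ipP hA hA hX hY hXs hYs) _.
by rewrite ler_wpM2l ?(numrad_offdiag_diag_le ipP hA) // !mulr_ge0 ?opnorm_ge0.
Qed.
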